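(* Let $f:\mathbb{R}^n\to\mathbb{R}$ and $a:\mathbb{R}^n\to\mathbb{R}^m$ be twice differentiable on $\mathbb{R}^n$, with parameters $\beta_1\in(0,1)$, $\beta_2\in(0,1)$, $\beta_3\in(\beta_2,1)$, $\beta_4\in(0,1)$, tolerances $\epsilon_{\mathrm{opt}}\in(0,\infty)$, $\epsilon_{\mathrm{far}},\epsilon_{\mathrm{inf}},\epsilon_{\mathrm{unbd}}\in(0,1)$, and $w\in\mathbb{R}^m$, $w\ge0$. Then, started from a point satisfying condition (C), the Simplified One-Phase Algorithm (Algorithm 1) terminates after a finite number of calls to the aggressive step procedure (Algorithm 2); i.e., it cannot make infinitely many calls to Algorithm 2.
   Context: Problem: minimize $f(x)$ subject to $a(x)\le0$. Notation: $e$ all-ones vector, $S=\mathrm{diag}(s)$, $Y=\mathrm{diag}(y)$, $\nabla a(x)$ the $m\times n$ Jacobian. Definitions: $\mathcal{L}_\mu(x,y)=f(x)+(y-\mu\beta_1e)^Ta(x)$; $\psi_\mu(x)=f(x)-\mu\sum_i(\beta_1a_i(x)+\log(\mu w_i-a_i(x)))$; $\phi_\mu(x,s,y)=\psi_\mu(x)+\|Sy-\mu e\|_\infty^3/\mu^2$; $\sigma(y)=100/\max\{100,\|y\|_\infty\}$; $\mathcal{M}=\nabla^2_{xx}\mathcal{L}_\mu(x,y)+\nabla a(x)^TYS^{-1}\nabla a(x)$. Condition (C): $(x,s,y,\mu)\in\mathbb{R}^n\times\mathbb{R}^m_{++}\times\mathbb{R}^m_{++}\times\mathbb{R}_{++}$,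 $s_iy_i/\mu\in[\beta_2,1/\beta_2]$ for all $i$, $a(x)+s=\mu w$. Termination: (T1) $\sigma(y)\|\nabla_x\mathcal{L}_0(x,y)\|_\infty\le\epsilon_{\mathrm{opt}}$, $\sigma(y)\|Sy\|_\infty\le\epsilon_{\mathrm{opt}}$, $\|a(x)+s\|_\infty\le\epsilon_{\mathrm{opt}}$; (T2) $a(x)^Ty>0$, $\|\nabla a(x)^Ty\|_1/(a(x)^Ty)\le\epsilon_{\mathrm{far}}$, $(\|\nabla a(x)^Ty\|_1+s^Ty)/\|y\|_1\le\epsilon_{\mathrm{inf}}$; (T3) $\|x\|_\infty\ge1/\epsilon_{\mathrm{unbd}}$. Aggressive criterion (A): $\sigma(y)\|\nabla_x\mathcal{L}_\mu(x,y)\|_\infty\le\mu$; $\|\nabla_x\mathcal{L}_\mu(x,y)\|_1\le\|\nabla f(x)-\beta_1\mu\nabla a(x)^Te\|_1+s^Ty$; $s_iy_i/\mu\in[\beta_3,1/\beta_3]$ for all $i$. Direction for $\gamma\in[0,1]$ and $\delta\ge0$ with $\mathcal{M}+\delta I\succ0$: $b_D=\nabla_x\mathcal{L}_{\gamma\mu}(x,y)$, $b_P=(1-\gamma)\mu w$, $b_C=Ys-\gamma\mu e$; $(\mathcal{M}+\delta I)d_x=-(b_D+\nabla a(x)^TS^{-1}(Yb_P-b_C))$; $d_y=-S^{-1}Y(\nabla a(x)d_x+b_P-Y^{-1}b_C)$. Update: $\mu^+=(1-(1-\gamma)\alpha_P)\mu$, $x^+=x+\alpha_Pd_x$, $s^+=\mu^+w-a(x^+)$,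 $y^+=y+\alpha_Dd_y$; admissible if $s^+,y^+,\mu^+>0$ and $s^+_iy^+_i/\mu^+\in[\beta_2,1/\beta_2]$ for all $i$. $\theta(\mu,s)=\min\{1/2,\frac{\beta_3-\beta_2}{2\beta_3\mu}\min_{i:w_i>0}s_i/w_i\}$. Algorithm 2 (aggressive step, given $\delta$): direction with $\gamma=0$; largest $\alpha_P\in[0,\min\{1/2,\mu\}]$ with the update admissible for some $\alpha_D\in[0,1]$; then the largest admissible $\alpha_D$; success iff $\alpha_P\ge\theta(\mu,s)$. Algorithm 3 (stabilization step, given $\delta$): direction with $\gamma=1$; largest $\alpha_P=\alpha_D\in[0,1]$ with the update admissible and $\phi_\mu(x^+,s^+,y^+)\le\phi_\mu(x,s,y)+\alpha_P\beta_4(\tfrac12(\nabla\psi_\mu(x)^Td_x-\tfrac\delta2\alpha_P\|d_x\|^2)-\|Sy-\mu e\|_\infty^3/\mu^2)$. Algorithm 1: input $x^0$, $\mu^0,s^0,y^0>0$ with $a(x^0)+s^0=\mu^0w$ and $s^0_iy^0_i/\mu^0\in[\beta_2,1/\beta_2]$. Each iteration: if (T1), (T2) or (T3) holds at the current point, terminate; set $\delta_{\min}=\max\{0,\mu-2\lambda_{\min}(\mathcal{M})\}$; if (A) holds: if $\delta_{\min}=0$ run Algorithm 2 with $\delta=0$ and accept its point if it succeeds; otherwise (or if $\delta_{\min}>0$) run Algorithm 2 with $\delta$ large enough that it succeeds and accept its point; if (A) fails, run Algorithm 3 with $\delta=\delta_{\min}$ and accept its point. *)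

From HB Require Import structures.
From mathcomp Require Import all_boot all_order all_algebra.
From mathcomp Require Import all_classical all_reals all_analysis.
Set Implicit Arguments. Unset Strict Implicit. Unset Printing Implicit Defensive.
Import Order.TTheory GRing.Theory Num.Theory.
Import numFieldNormedType.Exports.
Local Open Scope classical_set_scope.
Local Open Scope ring_scope.

Section Calculus.
Variables (R : realType) (n : nat).

Definition ecol k (i : 'I_k) : 'cV[R]_k := delta_mx i 0.

Definition grad (g : 'cV[R]_n -> R) (x : 'cV[R]_n) : 'cV[R]_n :=
  \col_i ('D_(ecol i) g x).

Definition hess (g : 'cV[R]_n -> R) (x : 'cV[R]_n) : 'M[R]_n :=
  \matrix_(i, j) ('D_(ecol i) (fun z => 'D_(ecol j) g z) x).

Definition jac m (F : 'cV[R]_n -> 'cV[R]_m) (x : 'cV[R]_n) : 'M[R]_(m, n) :=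
  \matrix_(i, j) (('D_(ecol j) F x) i 0).

Definition twice_differentiable (V : normedModType R) (F : 'cV[R]_n -> V) :=
  (forall x, differentiable F x) /\
  (forall (j : 'I_n) x, differentiable (fun z => 'D_(ecol j) F z) x).

End Calculus.

Section LinAlg.
Variable R : realType.

Definition norm_inf k (v : 'cV[R]_k) : R := \big[Num.max/0]_i `|v i 0|.
Definition norm1 k (v : 'cV[R]_k) : R := \sum_i `|v i 0|.
Definition norm2sq k (v : 'cV[R]_k) : R := \sum_i (v i 0) ^+ 2.
Definition dotv k (u v : 'cV[R]_k) : R := (u^T *m v) 0 0.
Definition onesv k : 'cV[R]_k := const_mx 1.
Definition diagv k (v : 'cV[R]_k) : 'M[R]_k := diag_mx v^T.

Definition posdef k (A : 'M[R]_k) :=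
  forall v : 'cV[R]_k, v != 0 -> 0 < (v^T *m A *m v) 0 0.

Definition lambda_min k (A : 'M[R]_k) : R := inf [set l : R | eigenvalue A l].

End LinAlg.
Arguments onesv {R k}.

Record op_params (R : realType) (n m : nat) := OPParams {
  op_f : 'cV[R]_n -> R;
  op_a : 'cV[R]_n -> 'cV[R]_m;
  op_beta1 : R; op_beta2 : R; op_beta3 : R; op_beta4 : R;
  op_eps_opt : R; op_eps_far : R; op_eps_inf : R; op_eps_unbd : R;
  op_w : 'cV[R]_m }.

Record ipstate (R : realType) (n m : nat) := IPState {
  st_x : 'cV[R]_n; st_s : 'cV[R]_m; st_y : 'cV[R]_m; st_mu : R }.

Section OnePhase.
Variables (R : realType) (n m : nat) (P : op_params R n m).

Local Notation f := (op_f P).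
Local Notation a := (op_a P).
Local Notation b1 := (op_beta1 P).
Local Notation b2 := (op_beta2 P).
Local Notation b3 := (op_beta3 P).
Local Notation b4 := (op_beta4 P).
Local Notation w := (op_w P).
Local Notation state := (ipstate R n m).

Implicit Types (z : state) (x : 'cV[R]_n) (s y : 'cV[R]_m) (mu : R).

Definition lagr mu y x : R := f x + dotv (y - (mu * b1) *: onesv) (a x).
Definition gradL mu y x : 'cV[R]_n := grad (lagr mu y) x.
Definition hessL mu y x : 'M[R]_n := hess (lagr mu y) x.

Definition psi mu x : R :=
  f x - mu * \sum_i (b1 * a x i 0 + ln (mu * w i 0 - a x i 0)).

Definition phi mu x s y : R :=
  psi mu x + (norm_inf (diagv s *m y - mu *: onesv)) ^+ 3 / mu ^+ 2.

Definition sigma y : R := 100 / Num.max 100 (norm_inf y).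

Definition Mmat z : 'M[R]_n :=
  hessL (st_mu z) (st_y z) (st_x z)
  + (jac a (st_x z))^T *m diagv (st_y z) *m invmx (diagv (st_s z))
    *m jac a (st_x z).

Definition condC z : Prop :=
  [/\ 0 < st_mu z,
      (forall i, 0 < st_s z i 0),
      (forall i, 0 < st_y z i 0),
      (forall i, b2 <= st_s z i 0 * st_y z i 0 / st_mu z <= 1 / b2)
    & a (st_x z) + st_s z = st_mu z *: w].

Definition T1 z : Prop :=
  [/\ sigma (st_y z) * norm_inf (gradL 0 (st_y z) (st_x z)) <= op_eps_opt P,
      sigma (st_y z) * norm_inf (diagv (st_s z) *m st_y z) <= op_eps_opt P
    & norm_inf (a (st_x z) + st_s z) <= op_eps_opt P].

Definition T2 z : Prop :=
  [/\ 0 < dotv (a (st_x z)) (st_y z),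
      norm1 ((jac a (st_x z))^T *m st_y z) / dotv (a (st_x z)) (st_y z)
        <= op_eps_far P
    & (norm1 ((jac a (st_x z))^T *m st_y z) + dotv (st_s z) (st_y z))
        / norm1 (st_y z) <= op_eps_inf P].

Definition T3 z : Prop := 1 / op_eps_unbd P <= norm_inf (st_x z).

Definition terminates z : Prop := T1 z \/ T2 z \/ T3 z.

Definition critA z : Prop :=
  [/\ sigma (st_y z) * norm_inf (gradL (st_mu z) (st_y z) (st_x z)) <= st_mu z,
      norm1 (gradL (st_mu z) (st_y z) (st_x z))
        <= norm1 (grad f (st_x z)
                  - (b1 * st_mu z) *: ((jac a (st_x z))^T *m onesv))
           + dotv (st_s z) (st_y z)
    & forall i, b3 <= st_s z i 0 * st_y z i 0 / st_mu z <= 1 / b3].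

Definition delta_min z : R := Num.max 0 (st_mu z - 2 * lambda_min (Mmat z)).

Definition dir_x (gamma delta : R) z : 'cV[R]_n :=
  let x := st_x z in let s := st_s z in let y := st_y z in let mu := st_mu z in
  let bD := gradL (gamma * mu) y x in
  let bP := ((1 - gamma) * mu) *: w in
  let bC := diagv y *m s - (gamma * mu) *: onesv in
  - (invmx (Mmat z + delta%:M)
     *m (bD + (jac a x)^T *m invmx (diagv s) *m (diagv y *m bP - bC))).

Definition dir_y (gamma delta : R) z : 'cV[R]_m :=
  let x := st_x z in let s := st_s z in let y := st_y z in let mu := st_mu z in
  let bP := ((1 - gamma) * mu) *: w in
  let bC := diagv y *m s - (gamma * mu) *: onesv in
  - (invmx (diagv s) *m diagv y
     *m (jac a x *m dir_x gamma delta z + bP - invmx (diagv y) *m bC)).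

Definition update (gamma delta aP aD : R) z : state :=
  let mu' := (1 - (1 - gamma) * aP) * st_mu z in
  let x' := st_x z + aP *: dir_x gamma delta z in
  IPState x' (mu' *: w - a x') (st_y z + aD *: dir_y gamma delta z) mu'.

Definition admissible z : Prop :=
  [/\ 0 < st_mu z,
      (forall i, 0 < st_s z i 0),
      (forall i, 0 < st_y z i 0)
    & (forall i, b2 <= st_s z i 0 * st_y z i 0 / st_mu z <= 1 / b2)].

Definition theta mu s : R :=
  match [pick i | 0 < w i 0] with
  | Some i0 =>
      Num.min (1 / 2)
        ((b3 - b2) / (2 * b3 * mu) *
         \big[Num.min/(s i0 0 / w i0 0)]_(i | 0 < w i 0) (s i 0 / w i 0))
  | None => 1 / 2  (* minimum over an empty index set is +oo *)
  end.

(* Algorithm 2 (aggressive step) with a given delta: (aP, aD) are the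
   step sizes it computes. *)
Definition alg2_feasP delta z (aP : R) : Prop :=
  0 <= aP <= Num.min (1 / 2) (st_mu z) /\
  exists aD, 0 <= aD <= 1 /\ admissible (update 0 delta aP aD z).

Definition alg2_steps delta z (aP aD : R) : Prop :=
  [/\ 0 <= delta /\ posdef (Mmat z + delta%:M),
      alg2_feasP delta z aP,
      (forall aP', alg2_feasP delta z aP' -> aP' <= aP),
      (0 <= aD <= 1 /\ admissible (update 0 delta aP aD z))
    & (forall aD', 0 <= aD' <= 1 -> admissible (update 0 delta aP aD' z) ->
         aD' <= aD)].

Definition alg2_succeeds z (aP : R) : Prop := theta (st_mu z) (st_s z) <= aP.

Definition alg3_ok delta z (al : R) : Prop :=
  let x := st_x z in let s := st_s z in let y := st_y z in let mu := st_mu z in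
  let dx := dir_x 1 delta z in
  let z' := update 1 delta al al z in
  [/\ 0 <= al <= 1, admissible z'
    & phi mu (st_x z') (st_s z') (st_y z')
        <= phi mu x s y
           + al * b4 * ((1 / 2) * (dotv (grad (psi mu) x) dx
                                   - delta / 2 * al * norm2sq dx)
                        - (norm_inf (diagv s *m y - mu *: onesv)) ^+ 3
                          / mu ^+ 2)].

Definition alg3_step delta z (al : R) : Prop :=
  [/\ 0 <= delta, posdef (Mmat z + delta%:M), alg3_ok delta z al
    & forall al', alg3_ok delta z al' -> al' <= al].

Definition alg1_aggressive_iter z z' : Prop :=
  critA z /\
  ( (delta_min z = 0 /\
       exists aP aD, [/\ alg2_steps 0 z aP aD, alg2_succeeds z aP
                       & z' = update 0 0 aP aD z])
    \/
    ( (delta_min z = 0 ->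
         exists aP aD, alg2_steps 0 z aP aD /\ ~ alg2_succeeds z aP) /\
      exists delta aP aD, [/\ alg2_steps delta z aP aD, alg2_succeeds z aP
                            & z' = update 0 delta aP aD z])).

Definition alg1_stabilization_iter z z' : Prop :=
  ~ critA z /\
  exists al, alg3_step (delta_min z) z al /\
             z' = update 1 (delta_min z) al al z.

Definition alg1_iter z z' : Prop :=
  ~ terminates z /\ (alg1_aggressive_iter z z' \/ alg1_stabilization_iter z z').

(* Algorithm 1 calls Algorithm 2 (at least once) during the iteration
   performed at z iff z is not terminal and (A) holds at z. *)
Definition alg1_calls_alg2 z : Prop := ~ terminates z /\ critA z.

End OnePhase.

(* Along a run, condition (C) is preserved and mu never increases: a
   stabilization step keeps mu and an aggressive step multiplies it by
   1 - alpha_P.  Whenever Algorithm 2 is called, (T3) fails, so x lies in a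
   fixed box on which the first derivatives of f and a are bounded; (T1)
   fails, so mu stays above a fixed eps > 0; and criterion (A) together with
   the failure of (T2) bounds w^T y, hence bounds every s_i / w_i from below.
   This bounds theta(mu, s) below uniformly, so each call of Algorithm 2
   decreases mu by a fixed amount, which can happen only finitely often
   since mu stays positive. *)

From HB Require Import structures.
From mathcomp Require Import all_boot all_order all_algebra.
From mathcomp Require Import all_classical all_reals all_analysis.
From mathcomp Require Import lra.
Import Order.TTheory GRing.Theory Num.Theory.
Import numFieldNormedType.Exports.
Local Open Scope ring_scope.

Lemma eventually_not_of_uniform_decrease {R : archiRealFieldType} {u : nat -> R}
    {Q : nat -> Prop} {d : R} :
  0 < d -> (forall k, 0 < u k) -> (forall k, u k.+1 <= u k) ->
  (forall k, Q k -> u k.+1 <= u k - d) ->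
  exists N, forall k, (N <= k)%N -> ~ Q k.
Proof.
move=> d_gt0 u_gt0 u_noninc u_drop.
have u_le : {homo u : i j / (i <= j)%N >-> j <= i} by apply/nonincreasing_seqP.
apply: contrapT => Q_often.
have u_below j : exists k, u k <= u 0%N - j%:R * d.
  elim: j => [|j [k u_k]]; first by exists 0%N; rewrite mul0r subr0.
  have [k' [le_kk' Qk']] : exists k', (k <= k')%N /\ Q k'.
    apply: contrapT => Q_never; apply: Q_often; exists k => k' le_kk' Qk'.
    by apply: Q_never; exists k'.
  exists k'.+1; apply: le_trans (u_drop _ Qk') _.
  by have := u_le _ _ le_kk'; rewrite -natr1; lra.
have [k u_k] := u_below (Num.truncn (u 0%N / d)).+1.
have := truncnS_gt (u 0%N / d); rewrite ltr_pdivrMr // => u0_lt.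
by have := u_gt0 k; lra.
Qed.

Section Norms.
Context {R : realType} {k : nat}.
Implicit Types (u v : 'cV[R]_k) (c : R).

Lemma norm_inf_ge v i : `|v i 0| <= norm_inf v.
Proof. exact: le_bigmax. Qed.

Lemma norm_inf_ge0 v : 0 <= norm_inf v.
Proof. by elim/big_ind: (norm_inf v) => // x y x_ge0 _; rewrite le_max x_ge0. Qed.

Lemma norm_inf_le v c : 0 <= c -> (forall i, `|v i 0| <= c) -> norm_inf v <= c.
Proof. by move=> c_ge0 v_le; apply: bigmax_le. Qed.

Lemma norm_infD u v : norm_inf (u + v) <= norm_inf u + norm_inf v.
Proof.
apply: norm_inf_le => [|i]; first by rewrite addr_ge0 ?norm_inf_ge0.
by rewrite mxE (le_trans (ler_normD _ _)) // lerD ?norm_inf_ge.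
Qed.

Lemma norm_infZ c v : norm_inf (c *: v) <= `|c| * norm_inf v.
Proof.
apply: norm_inf_le => [|i]; first by rewrite mulr_ge0 ?norm_inf_ge0.
by rewrite mxE normrM ler_wpM2l ?norm_inf_ge.
Qed.

Lemma norm1_ge0 v : 0 <= norm1 v.
Proof. exact: sumr_ge0. Qed.

Lemma norm1B u v : norm1 (u - v) <= norm1 u + norm1 v.
Proof.
rewrite /norm1 -big_split /=; apply: ler_sum => i _.
by rewrite !mxE (le_trans (ler_normB _ _)).
Qed.

Lemma norm1Z c v : norm1 (c *: v) = `|c| * norm1 v.
Proof. by rewrite /norm1 mulr_sumr; apply: eq_bigr => i _; rewrite mxE normrM. Qed.

Lemma norm1_le v c : (forall i, `|v i 0| <= c) -> norm1 v <= k%:R * c.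
Proof.
move=> v_le; apply: le_trans (ler_sum _ (fun i _ => v_le i)) _.
by rewrite sumr_const card_ord mulr_natl.
Qed.

Lemma dotvE u v : dotv u v = \sum_i u i 0 * v i 0.
Proof. by rewrite /dotv mxE; apply: eq_bigr => i _; rewrite mxE. Qed.

Lemma dotv_le_norm_inf_norm1 u v : dotv u v <= norm_inf u * norm1 v.
Proof.
rewrite dotvE /norm1 mulr_sumr; apply: ler_sum => i _.
by rewrite (le_trans (ler_norm _)) // normrM ler_wpM2r ?norm_inf_ge.
Qed.

Lemma diagv_mulE u v i : (diagv u *m v) i 0 = u i 0 * v i 0.
Proof. by rewrite /diagv mul_diag_mx !mxE. Qed.

Lemma sigma_ge0_le1 v : 0 <= sigma v <= 1.
Proof.
have max_gt0 : 0 < Num.max 100 (norm_inf v) :> R by rewrite lt_max ltr0n.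
apply/andP; split; first by rewrite divr_ge0 ?ltW.
by rewrite ler_pdivrMr // mul1r le_max lexx.
Qed.

End Norms.

Lemma abs_trmx_mul_ones_le (R : realType) p q (J : 'M[R]_(p, q)) (M : R) j :
  (forall i j, `|J i j| <= M) -> `|(J^T *m onesv) j 0| <= p%:R * M.
Proof.
move=> J_le; have -> : (J^T *m onesv) j 0 = \sum_i J i j.
  by rewrite !mxE; apply: eq_bigr => i _; rewrite !mxE mulr1.
apply: le_trans (ler_norm_sum _ _ _) _.
by apply: le_trans (ler_sum _ (fun i _ => J_le i j)) _; rewrite sumr_const card_ord mulr_natl.
Qed.

Section Calculus.
Context {R : realType}.

Lemma continuous_sum (T : topologicalType) (I : finType) (F : I -> T -> R) :
  (forall i, continuous (F i)) -> continuous (fun z => \sum_i F i z).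
Proof.
move=> F_cont z; rewrite -fct_sumE.
by elim/big_ind: _ => [|f g|i _]; [exact: cst_continuous|exact: continuousD|exact: F_cont].
Qed.

Lemma continuous_dotv {k} (u : 'cV[R]_k) : continuous (dotv u).
Proof.
have -> : dotv u = fun z => \sum_i u i 0 * z i 0 by apply/funext => z; rewrite dotvE.
apply: continuous_sum => i z.
by apply: continuousM; [exact: cst_continuous|exact: coord_continuous].
Qed.

Lemma dotv_is_linear {k} (u : 'cV[R]_k) : linear (dotv u).
Proof. by move=> c y z; rewrite /dotv mulmxDr -scalemxAr !mxE. Qed.

Definition dotv_linear {k} (u : 'cV[R]_k) : {linear 'cV[R]_k -> R} :=
  HB.pack (dotv u) (GRing.isLinear.Build _ _ _ _ _ (dotv_is_linear u)).

Lemma derive_linear_comp {U V W : normedModType R} (L : {linear V -> W})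
    (g : U -> V) x v :
  continuous L -> differentiable g x -> 'D_v (L \o g) x = L ('D_v g x).
Proof.
move=> L_cont g_diff.
have L_diff : differentiable L (g x) by exact: linear_differentiable.
rewrite deriveE; last exact: differentiable_comp.
by rewrite diff_comp // diff_lin // deriveE.
Qed.

Lemma gradL_jac n m (P : op_params R n m) c y x :
  (forall x, differentiable (op_f P) x) -> (forall x, differentiable (op_a P) x) ->
  gradL P c y x = grad (op_f P) x
                  + (jac (op_a P) x)^T *m (y - (c * op_beta1 P) *: onesv).
Proof.
move=> f_diff a_diff; set u := y - _.
apply/matrixP => j k; rewrite ord1 !mxE.
have dotv_cont : continuous (dotv_linear u) by exact: continuous_dotv.
have a_diff_u : differentiable (dotv_linear u \o op_a P) x.
  by apply: differentiable_comp => //; exact: linear_differentiable.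
have -> : lagr P c y = op_f P + (dotv_linear u \o op_a P) by [].
rewrite deriveD; [|exact: diff_derivable|exact: diff_derivable].
rewrite (derive_linear_comp (dotv_linear u)) //.
rewrite [dotv_linear u _]dotvE; congr (_ + _); apply: eq_bigr => i _.
by rewrite !mxE mulrC.
Qed.

Lemma continuous_partial {n} {V : normedModType R} {F : 'cV[R]_n -> V} j :
  twice_differentiable F -> continuous (fun z => 'D_(ecol R j) F z).
Proof. by move=> [_ dF] z; apply: differentiable_continuous; exact: dF. Qed.

Lemma continuous_trmx p q : continuous (fun M : 'M[R]_(p, q) => M^T).
Proof.
move=> M A /= /nbhs_ballP [e e_gt0 eA]; apply/nbhs_ballP; exists e => //= N [_ MN].
by apply: eA; split => // i j; rewrite !mxE; exact: MN.
Qed.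

Lemma bounded_on_norm_inf_ball {n} (h : 'cV[R]_n -> R) B :
  continuous h -> exists M, forall x, norm_inf x <= B -> `|h x| <= M.
Proof.
move=> h_cont.
pose box := [set v : 'rV[R]_n | forall i, `[-B, B]%classic (v ord0 i)]%classic.
have box_compact : compact box.
  by apply: (@rV_compact _ _ (fun=> `[-B, B]%classic)) => i; exact: segment_compact.
have hT_cont : continuous (h \o trmx).
  by move=> v; apply: continuous_comp; [exact: continuous_trmx|exact: h_cont].
have [M [_ M_bound]] :=
  compact_bounded (continuous_compact (continuous_subspaceT hT_cont) box_compact).
exists (M + 1) => x x_le; apply: (M_bound (M + 1)); first by rewrite ltrDl.
exists x^T; last by rewrite /= trmxK.
by move=> i /=; rewrite mxE in_itv /= -ler_norml (le_trans (norm_inf_ge _ _)).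
Qed.

Lemma abs_mx_entry_le {p q} (A : 'M[R]_(p, q)) i j : `|A i j| <= `|A|.
Proof. by rewrite [leRHS]/Num.norm /= mx_normrE; apply/bigmax_geP; right; exists (i, j). Qed.

Lemma derivatives_bounded_on_norm_inf_ball {n m : nat} {f : 'cV[R]_n -> R}
    {a : 'cV[R]_n -> 'cV[R]_m} (B : R) :
  twice_differentiable f -> twice_differentiable a ->
  exists2 M, 0 <= M & forall x, norm_inf x <= B ->
    (forall j, `|grad f x j 0| <= M) /\ (forall i j, `|jac a x i j| <= M).
Proof.
move=> f_C2 a_C2.
pose h := (fun x => \sum_j `|'D_(ecol R j) f x|) + (fun x => \sum_j `|'D_(ecol R j) a x|).
have h_cont : continuous h.
  move=> z; apply: continuousD; move: z; apply: continuous_sum => j z.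
    exact: cvg_norm (continuous_partial j f_C2 z).
  exact: cvg_norm (continuous_partial j a_C2 z).
have [M M_bound] := bounded_on_norm_inf_ball h B h_cont.
have h_le x : norm_inf x <= B -> h x <= `|M|.
  by move=> x_le; apply: le_trans (ler_norm _) (le_trans (M_bound x x_le) (ler_norm _)).
exists `|M| => // x x_le.
split=> [j|i j]; rewrite mxE; apply: le_trans (h_le x x_le); rewrite /h addrfctE.
  by rewrite (bigD1 j) //= -addrA lerDl addr_ge0 ?sumr_ge0.
apply: le_trans (abs_mx_entry_le _ i 0) _.
by rewrite [X in _ + X](bigD1 j) //= addrCA lerDl addr_ge0 ?sumr_ge0.
Qed.

End Calculus.

Section Iterates.
Context {R : realType} {n m : nat} {P : op_params R n m}.
Implicit Types z : ipstate R n m.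

Lemma alg1_aggressive_iter_update z z' :
  alg1_aggressive_iter P z z' ->
  exists delta aP aD, [/\ alg2_steps P delta z aP aD, alg2_succeeds P z aP
                        & z' = update P 0 delta aP aD z].
Proof.
case=> _ [[_ [aP [aD [steps succ ->]]]] | [_ [delta [aP [aD [steps succ ->]]]]]].
  by exists 0, aP, aD.
by exists delta, aP, aD.
Qed.

Lemma admissible_update_condC gamma delta aP aD z :
  admissible P (update P gamma delta aP aD z) ->
  condC P (update P gamma delta aP aD z).
Proof. by case=> mu_gt0 s_gt0 y_gt0 sy_bound; split=> //=; rewrite addrC subrK. Qed.

Lemma alg1_iter_condC z z' : alg1_iter P z z' -> condC P z'.
Proof.
case=> _ [/alg1_aggressive_iter_update [delta [aP [aD [[_ _ _ [_ adm] _] _ ->]]]]|].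
  exact: admissible_update_condC adm.
by case=> _ [al [[_ _ [_ adm _] _] ->]]; exact: admissible_update_condC adm.
Qed.

Lemma alg1_iter_mu_le z z' :
  0 < st_mu z -> alg1_iter P z z' -> st_mu z' <= st_mu z.
Proof.
move=> mu_gt0 [_ [/alg1_aggressive_iter_update [delta [aP [aD [steps _ ->]]]]|]].
  by case: steps => _ [/andP[aP_ge0 _] _] _ _ _ /=; rewrite subr0 mul1r; nra.
by case=> _ [al [_ ->]] /=; rewrite subrr mul0r subr0 mul1r.
Qed.

Lemma alg1_calls_alg2_mu z z' :
  alg1_calls_alg2 P z -> alg1_iter P z z' ->
  exists2 aP, theta P (st_mu z) (st_s z) <= aP & st_mu z' = (1 - aP) * st_mu z.
Proof.
case=> _ crit [_ [/alg1_aggressive_iter_update [delta [aP [aD [_ succ ->]]]]|[]//]].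
by exists aP => //=; rewrite subr0 mul1r.
Qed.

Lemma theta_ge mu0 mu (s : 'cV[R]_m) L :
  0 < op_beta2 P < op_beta3 P -> 0 <= L -> 0 < mu <= mu0 ->
  (forall i, 0 < op_w P i 0 -> L <= s i 0 / op_w P i 0) ->
  Num.min (1 / 2)
    ((op_beta3 P - op_beta2 P) / (2 * op_beta3 P * mu0) * L) <= theta P mu s.
Proof.
move=> /andP[b2_gt0 b23] L_ge0 /andP[mu_gt0 mu_le] L_le.
have b3_gt0 : 0 < op_beta3 P by apply: lt_trans b23.
have mu0_gt0 : 0 < mu0 by apply: lt_le_trans mu_le.
rewrite /theta; case: pickP => [i0 /= w_i0|_]; last by rewrite ge_min lexx.
rewrite le_min ge_min lexx /= ge_min; apply/orP; right.
apply: ler_pM => //.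
- by apply: divr_ge0; rewrite ?subr_ge0 ltW // !mulr_gt0.
- apply: ler_wpM2l; first by rewrite subr_ge0 ltW.
  rewrite lef_pV2 ?posrE ?mulr_gt0 //.
  by apply: ler_wpM2l; rewrite // mulr_ge0 // ltW.
- by apply: le_bigmin => [|i]; exact: L_le.
Qed.

End Iterates.

Section AggressiveIterate.
Context {R : realType} {n m : nat} {P : op_params R n m}.
Context {x : 'cV[R]_n} {s y : 'cV[R]_m} {mu : R}.
Variable M : R.
Local Notation f := (op_f P).
Local Notation a := (op_a P).
Local Notation b1 := (op_beta1 P).
Local Notation b3 := (op_beta3 P).
Local Notation w := (op_w P).
Hypotheses (f_diff : forall x, differentiable f x) (a_diff : forall x, differentiable a x).
Hypotheses (b1_gt0 : 0 < b1) (b3_gt0 : 0 < b3) (w_ge0 : forall i, 0 <= w i 0).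
Hypotheses (eps_far_gt0 : 0 < op_eps_far P) (eps_inf_gt0 : 0 < op_eps_inf P).
Hypotheses (mu_gt0 : 0 < mu) (s_gt0 : forall i, 0 < s i 0) (y_gt0 : forall i, 0 < y i 0).
Hypothesis feasible : a x + s = mu *: w.
Hypotheses (M_ge0 : 0 <= M) (grad_le : forall j, `|grad f x j 0| <= M)
  (jac_le : forall i j, `|jac a x i j| <= M).
Hypothesis crit : critA P (IPState x s y mu).
Local Notation J := (jac a x).

Lemma critA_sy i : b3 * mu <= s i 0 * y i 0 <= mu / b3.
Proof.
have [_ _ /(_ i)/andP[/= lo hi]] := crit.
rewrite ler_pdivlMr // in lo; rewrite ler_pdivrMr // mul1r [_^-1 * _]mulrC in hi.
by rewrite lo hi.
Qed.

Lemma critA_dotv_sy_le : dotv s y <= m%:R * (mu / b3).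
Proof.
rewrite dotvE; apply: le_trans (ler_sum _ (fun i _ => proj2 (andP (critA_sy i)))) _.
by rewrite sumr_const card_ord mulr_natl.
Qed.

Lemma critA_small_mu_T1 :
  mu * (1 + b1 * (m%:R * M)) + mu / b3 + mu * norm_inf w <= op_eps_opt P ->
  T1 P (IPState x s y mu).
Proof.
move=> small_mu; have /andP[sigma_ge0 sigma_le1] := sigma_ge0_le1 y.
have [/= crit_grad _ _] := crit; set Je := J^T *m onesv.
have Je_le : norm_inf Je <= m%:R * M.
  by apply: norm_inf_le => [|j]; [rewrite mulr_ge0|exact: abs_trmx_mul_ones_le].
have gradL0 : gradL P 0 y x = gradL P mu y x + (mu * b1) *: Je.
  by rewrite !gradL_jac // mul0r scale0r subr0 /Je scalemxAr -addrA -mulmxDr subrK.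
have gradL0_le : sigma y * norm_inf (gradL P 0 y x) <= mu * (1 + b1 * (m%:R * M)).
  have Je_mu_le : norm_inf ((mu * b1) *: Je) <= mu * (b1 * (m%:R * M)).
    apply: le_trans (norm_infZ _ _) _.
    rewrite ger0_norm -?mulrA; last by rewrite mulr_ge0 // ltW.
    by apply: ler_wpM2l; [exact: ltW|apply: ler_wpM2l; [exact: ltW|]].
  rewrite gradL0; apply: le_trans (ler_wpM2l sigma_ge0 (norm_infD _ _)) _.
  have := norm_inf_ge0 ((mu * b1) *: Je); nra.
have Sy_le : sigma y * norm_inf (diagv s *m y) <= mu / b3.
  have : norm_inf (diagv s *m y) <= mu / b3.
    apply: norm_inf_le => [|i]; first by rewrite divr_ge0 ?ltW.
    rewrite diagv_mulE ger0_norm; first by case/andP: (critA_sy i).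
    by rewrite mulr_ge0 // ltW.
  by have := norm_inf_ge0 (diagv s *m y); nra.
have feasible_le : norm_inf (a x + s) <= mu * norm_inf w.
  by rewrite feasible; apply: le_trans (norm_infZ _ _) _; rewrite ger0_norm // ltW.
have mu_grad_ge0 : 0 <= mu * (1 + b1 * (m%:R * M)).
  by rewrite mulr_ge0 ?addr_ge0 ?mulr_ge0 // ltW.
have mu_b3_ge0 : 0 <= mu / b3 by rewrite divr_ge0 // ltW.
have mu_w_ge0 : 0 <= mu * norm_inf w by rewrite mulr_ge0 ?norm_inf_ge0 // ltW.
by split=> /=; lra.
Qed.

Lemma critA_norm1_jacTy_le :
  norm1 (J^T *m y)
    <= 2 * (n%:R * M + b1 * mu * (n%:R * (m%:R * M))) + m%:R * (mu / b3).
Proof.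
set g := grad f x - (b1 * mu) *: (J^T *m onesv).
have gradL_mu : gradL P mu y x = g + J^T *m y.
  by rewrite gradL_jac // mulmxBr /g scalemxAr [b1 * mu]mulrC addrA addrAC.
have g_le : norm1 g <= n%:R * M + b1 * mu * (n%:R * (m%:R * M)).
  apply: le_trans (norm1B _ _) _; rewrite norm1Z ger0_norm; last by apply: mulr_ge0; exact: ltW.
  apply: lerD; first exact: norm1_le.
  apply: ler_wpM2l; first by apply: mulr_ge0; exact: ltW.
  by apply: norm1_le => j; exact: abs_trmx_mul_ones_le.
have [_ /= crit_norm1 _] := crit; rewrite -/g in crit_norm1.
have -> : J^T *m y = gradL P mu y x - g by rewrite gradL_mu addrC addKr.
by apply: le_trans (norm1B _ _) _; have := critA_dotv_sy_le; lra.
Qed.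

Lemma not_T2_dotv_wy_le K S :
  ~ T2 P (IPState x s y mu) -> norm1 (J^T *m y) <= K -> dotv s y <= S ->
  dotv w y <= (K / op_eps_far P + S) / mu + norm_inf w * ((K + S) / op_eps_inf P).
Proof.
move=> not_T2 JTy_le sy_le.
have K_ge0 : 0 <= K := le_trans (norm1_ge0 _) JTy_le.
have sy_ge0 : 0 <= dotv s y by rewrite dotvE sumr_ge0 // => i _; rewrite mulr_ge0 // ltW.
have S_ge0 : 0 <= S := le_trans sy_ge0 sy_le.
have ay : dotv (a x) y = mu * dotv w y - dotv s y.
  have -> : a x = mu *: w - s by rewrite -feasible addrK.
  by rewrite !dotvE mulr_sumr -sumrB; apply: eq_bigr => i _; rewrite !mxE mulrBl mulrA.
(* Unless [a(x)^T y <= 0] or the second test of (T2) fails (both bound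
   [a(x)^T y]), its third test fails, which bounds [|y|_1]. *)
have [ay_le|y1_le] :
    dotv (a x) y <= K / op_eps_far P \/ norm1 y <= (K + S) / op_eps_inf P.
  have [ay_le0|ay_gt0] := lerP (dotv (a x) y) 0.
    by left; apply: le_trans ay_le0 _; rewrite divr_ge0 // ltW.
  have [far_le|far_gt] := lerP (norm1 (J^T *m y) / dotv (a x) y) (op_eps_far P).
    right; have inf_lt : op_eps_inf P < (norm1 (J^T *m y) + dotv s y) / norm1 y.
      by rewrite ltNge; apply/negP => inf_le; apply: not_T2.
    have y1_gt0 : 0 < norm1 y.
      rewrite lt_neqAle norm1_ge0 andbT; apply/eqP => y1_0.
      by move: inf_lt; rewrite -y1_0 invr0 mulr0 ltNge ltW.
    rewrite ltr_pdivlMr // in inf_lt; rewrite ler_pdivlMr //; lra.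
  left; rewrite ltr_pdivlMr // in far_gt; rewrite ler_pdivlMr //; lra.
- rewrite -[dotv w y]addr0; apply: lerD.
    by rewrite ler_pdivlMr // mulrC; lra.
  by rewrite mulr_ge0 ?norm_inf_ge0 // divr_ge0 ?addr_ge0 // ltW.
- rewrite -[dotv w y]add0r; apply: lerD.
    by rewrite divr_ge0 ?addr_ge0 ?divr_ge0 // ltW.
  apply: le_trans (dotv_le_norm_inf_norm1 _ _) _.
  by apply: ler_wpM2l; first exact: norm_inf_ge0.
Qed.

Lemma critA_slack_ratio_ge Z i :
  dotv w y <= Z -> 0 < w i 0 -> b3 * mu / Z <= s i 0 / w i 0.
Proof.
move=> wy_le w_gt0.
have wy_i_le : w i 0 * y i 0 <= dotv w y.
  rewrite dotvE (bigD1 i) //= lerDl sumr_ge0 // => j _.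
  by rewrite mulr_ge0 // ltW.
have wy_i_gt0 : 0 < w i 0 * y i 0 by rewrite mulr_gt0.
have Z_gt0 : 0 < Z by lra.
have /andP[sy_ge _] := critA_sy i.
have := s_gt0 i; rewrite ler_pdivrMr // mulrAC ler_pdivlMr //; nra.
Qed.

End AggressiveIterate.

Section UniformDecrease.
Context {R : realType} {n m : nat}.
Variables (P : op_params R n m) (mu0 M : R).
Local Notation b1 := (op_beta1 P).
Local Notation b2 := (op_beta2 P).
Local Notation b3 := (op_beta3 P).
Local Notation w := (op_w P).
Local Notation eps_far := (op_eps_far P).
Local Notation eps_inf := (op_eps_inf P).
Hypotheses (f_diff : forall x, differentiable (op_f P) x)
  (a_diff : forall x, differentiable (op_a P) x).
Hypotheses (b1_gt0 : 0 < b1) (b2_gt0 : 0 < b2) (b23 : b2 < b3) (w_ge0 : forall i, 0 <= w i 0).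
Hypotheses (eps_opt_gt0 : 0 < op_eps_opt P) (eps_far_gt0 : 0 < eps_far)
  (eps_inf_gt0 : 0 < eps_inf).
Hypotheses (mu0_gt0 : 0 < mu0) (M_ge0 : 0 <= M).
Hypothesis M_bound : forall x, norm_inf x <= 1 / op_eps_unbd P ->
  (forall j, `|grad (op_f P) x j 0| <= M) /\ (forall i j, `|jac (op_a P) x i j| <= M).

(* At a point where (A) holds: (T1) succeeds once [mu <= eps]
   (critA_small_mu_T1); [S] and [K] bound [s^T y] and [|grad a(x)^T y|_1];
   [Z] bounds [w^T y] if (T2) fails (the [+ 1] only makes it positive); hence
   [L] bounds every [s_i / w_i] from below and [th] bounds [theta]. *)
Let W := norm_inf w.
Let D := 1 + b1 * (m%:R * M) + 1 / b3 + W.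
Let eps := op_eps_opt P / D.
Let S := m%:R * (mu0 / b3).
Let K := 2 * (n%:R * M + b1 * mu0 * (n%:R * (m%:R * M))) + S.
Let Z := (K / eps_far + S) / eps + W * ((K + S) / eps_inf) + 1.
Let L := b3 * eps / Z.
Let th := Num.min (1 / 2) ((b3 - b2) / (2 * b3 * mu0) * L).

Let b3_gt0 : 0 < b3. Proof. exact: lt_trans b23. Qed.

Let D_gt0 : 0 < D.
Proof.
have : 0 <= b1 * (m%:R * M) by rewrite !mulr_ge0 // ltW.
have : 0 <= 1 / b3 by rewrite divr_ge0 // ltW.
by have := norm_inf_ge0 w; rewrite /D /W; lra.
Qed.

Let eps_gt0 : 0 < eps. Proof. by rewrite divr_gt0. Qed.

Let S_ge0 : 0 <= S. Proof. by rewrite mulr_ge0 // divr_ge0 // ltW. Qed.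

Let K_ge0 : 0 <= K.
Proof. by rewrite addr_ge0 // !mulr_ge0 // ?addr_ge0 ?mulr_ge0 // ltW. Qed.

Let Z_gt0 : 0 < Z.
Proof.
have far_ge0 : 0 <= K / eps_far by apply: divr_ge0 => //; exact: ltW.
have : 0 <= (K / eps_far + S) / eps by apply: divr_ge0; [exact: addr_ge0|exact: ltW].
have : 0 <= W * ((K + S) / eps_inf).
  apply: mulr_ge0; first exact: norm_inf_ge0.
  by apply: divr_ge0; [exact: addr_ge0|exact: ltW].
by rewrite /Z; lra.
Qed.

Let th_gt0 : 0 < th.
Proof.
have L_gt0 : 0 < L by rewrite divr_gt0 // mulr_gt0.
by rewrite lt_min divr_gt0 //= mulr_gt0 // divr_gt0 ?subr_gt0 // !mulr_gt0.
Qed.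

Let alg2_call_derivatives_bounded {x s y mu} :
  alg1_calls_alg2 P (IPState x s y mu) ->
  (forall j, `|grad (op_f P) x j 0| <= M) /\ (forall i j, `|jac (op_a P) x i j| <= M).
Proof.
case=> /not_orP[_ /not_orP[_ not_T3]] _; apply: M_bound.
by case: (lerP (1 / op_eps_unbd P) (norm_inf x)) => [x_ge|/ltW //]; case: not_T3.
Qed.

Let alg2_call_eps_lt_mu {x s y mu} :
  condC P (IPState x s y mu) -> alg1_calls_alg2 P (IPState x s y mu) -> eps < mu.
Proof.
case=> /= mu_gt0 s_gt0 y_gt0 _ feasible calls.
have [grad_le jac_le] := alg2_call_derivatives_bounded calls.
have [/not_orP[not_T1 _] crit] := calls.
rewrite ltNge; apply/negP => mu_le_eps; apply: not_T1.
apply: (critA_small_mu_T1 M) => //.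
have : mu * D <= eps * D by apply: ler_wpM2r => //; exact: ltW.
by rewrite divfK ?lt0r_neq0 // /D /W; lra.
Qed.

Let alg2_call_theta_ge {x s y mu} :
  condC P (IPState x s y mu) -> mu <= mu0 -> alg1_calls_alg2 P (IPState x s y mu) ->
  th <= theta P mu s.
Proof.
move=> condCz mu_le calls; have eps_lt_mu := alg2_call_eps_lt_mu condCz calls.
have [/= mu_gt0 s_gt0 y_gt0 _ feasible] := condCz.
have [grad_le jac_le] := alg2_call_derivatives_bounded calls.
have [/not_orP[_ /not_orP[not_T2 _]] crit] := calls.
have mu_b3_le : m%:R * (mu / b3) <= S.
  by apply: ler_wpM2l => //; apply: ler_wpM2r => //; rewrite invr_ge0 ltW.
have sy_le : dotv s y <= S := le_trans (critA_dotv_sy_le mu_gt0 crit) mu_b3_le.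
have JTy_le : norm1 ((jac (op_a P) x)^T *m y) <= K.
  apply: le_trans (critA_norm1_jacTy_le M f_diff a_diff b1_gt0 mu_gt0 grad_le jac_le crit) _.
  have : b1 * mu * (n%:R * (m%:R * M)) <= b1 * mu0 * (n%:R * (m%:R * M)).
    by apply: ler_wpM2r; [rewrite !mulr_ge0|apply: ler_wpM2l => //; exact: ltW].
  by rewrite /K; lra.
have wy_le : dotv w y <= Z.
  apply: le_trans (not_T2_dotv_wy_le eps_far_gt0 eps_inf_gt0 mu_gt0 s_gt0 y_gt0
                     feasible K S not_T2 JTy_le sy_le) _.
  have : (K / eps_far + S) / mu <= (K / eps_far + S) / eps.
    apply: ler_wpM2l; first by rewrite addr_ge0 // divr_ge0 // ltW.
    by rewrite lef_pV2 ?posrE // ltW.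
  by rewrite /Z /W; lra.
apply: theta_ge => [|||i w_gt0]; first by rewrite b2_gt0 b23.
- by apply: divr_ge0; [apply: mulr_ge0|]; exact: ltW.
- by rewrite mu_gt0 mu_le.
apply: le_trans (critA_slack_ratio_ge w_ge0 mu_gt0 s_gt0 y_gt0 crit Z i wy_le w_gt0).
apply: ler_wpM2r; first by rewrite invr_ge0 ltW.
by apply: ler_wpM2l; [exact: ltW|exact: ltW].
Qed.

Lemma alg2_call_decreases_mu :
  exists2 d, 0 < d & forall z z', condC P z -> st_mu z <= mu0 ->
    alg1_calls_alg2 P z -> alg1_iter P z z' -> st_mu z' <= st_mu z - d.
Proof.
exists (th * eps) => [|[x s y mu] z' condCz /= mu_le calls iter]; first exact: mulr_gt0.
have eps_lt_mu := alg2_call_eps_lt_mu condCz calls.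
have th_le := alg2_call_theta_ge condCz mu_le calls.
have [aP /= aP_ge ->] := alg1_calls_alg2_mu _ _ calls iter.
have : th * eps <= aP * mu.
  by apply: ler_pM; [exact: ltW|exact: ltW|exact: le_trans aP_ge|exact: ltW].
by rewrite /=; lra.
Qed.

End UniformDecrease.

Theorem corollary1 (R : realType) (n m : nat)
  (f : 'cV[R]_n -> R) (a : 'cV[R]_n -> 'cV[R]_m)
  (beta1 beta2 beta3 beta4 eps_opt eps_far eps_inf eps_unbd : R)
  (w : 'cV[R]_m) :
  twice_differentiable f -> twice_differentiable a ->
  0 < beta1 < 1 -> 0 < beta2 < 1 -> beta2 < beta3 < 1 -> 0 < beta4 < 1 ->
  0 < eps_opt -> 0 < eps_far < 1 -> 0 < eps_inf < 1 -> 0 < eps_unbd < 1 ->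
  (forall i, 0 <= w i 0) ->
  let P := OPParams f a beta1 beta2 beta3 beta4
                    eps_opt eps_far eps_inf eps_unbd w in
  forall run : nat -> ipstate R n m,
    condC P (run 0%N) ->
    (forall k, alg1_iter P (run k) (run k.+1)) ->
    exists N : nat, forall k : nat, (N <= k)%N -> ~ alg1_calls_alg2 P (run k).
Proof.
move=> f_C2 a_C2 /andP[b1_gt0 _] /andP[b2_gt0 _] /andP[b23 _] _ eps_opt_gt0
  /andP[eps_far_gt0 _] /andP[eps_inf_gt0 _] _ w_ge0 P run condC0 iter.
have condC_run k : condC P (run k).
  by case: k => [|k]; [exact: condC0|exact: alg1_iter_condC (iter k)].
have mu_gt0 k : 0 < st_mu (run k) by case: (condC_run k).
have mu_noninc k : st_mu (run k.+1) <= st_mu (run k).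
  exact: alg1_iter_mu_le (mu_gt0 k) (iter k).
have mu_le0 k : st_mu (run k) <= st_mu (run 0%N).
  by elim: k => // k IH; exact: le_trans (mu_noninc k) IH.
have [M M_ge0 M_bound] :=
  derivatives_bounded_on_norm_inf_ball (1 / eps_unbd) f_C2 a_C2.
have [d d_gt0 mu_drop] := alg2_call_decreases_mu P (st_mu (run 0%N)) M
  f_C2.1 a_C2.1 b1_gt0 b2_gt0 b23 w_ge0 eps_opt_gt0 eps_far_gt0 eps_inf_gt0
  (mu_gt0 0%N) M_ge0 M_bound.
apply: (eventually_not_of_uniform_decrease d_gt0 mu_gt0 mu_noninc) => k calls.
exact: mu_drop (condC_run k) (mu_le0 k) calls (iter k).
Qed.
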